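(* Let $X\in\mathbb{R}^{d\times d}$ be positive definite with eigenvalues $\gamma_1\geqslant\dots\geqslant\gamma_d$ satisfying $\lambda\leqslant\gamma_i\leqslant\Lambda$, where $0<\lambda\leqslant\Lambda$. Set $\mu=\frac{4}{(\sqrt\lambda+\sqrt\Lambda)^2}$, $\beta=\big(\frac{\sqrt\Lambda-\sqrt\lambda}{\sqrt\Lambda+\sqrt\lambda}\big)^2$, and for $i\in\{1,\dots,d\}$ let $X^{(i)}_{\mu,\beta}=\begin{bmatrix}1+\beta-\mu\gamma_i & -\beta\\ 1 & 0\end{bmatrix}$. Then $$\max_{i\in\{1,\dots,d\}}\frac{\|X^{(i)}_{\mu,\beta}\|_2^2}{\|(X^{(i)}_{\mu,\beta})^2\|_2}\leqslant\frac1\beta\,(1+4\beta+\beta^2).$$ *)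

From HB Require Import structures.
From mathcomp Require Import all_boot all_order all_algebra.
From mathcomp Require Import boolp classical_sets reals.
Set Implicit Arguments. Unset Strict Implicit. Unset Printing Implicit Defensive.
Import Order.TTheory GRing.Theory Num.Theory.
Local Open Scope ring_scope.
Local Open Scope classical_set_scope.

Definition vnorm2 {R : realType} {n : nat} (v : 'cV[R]_n) : R :=
  Num.sqrt (\sum_(i < n) (v i 0) ^+ 2).

Definition spec_norm {R : realType} {m n : nat} (A : 'M[R]_(m, n)) : R :=
  sup [set vnorm2 (A *m v) | v in [set v : 'cV[R]_n | vnorm2 v <= 1]].

Definition posdef {R : realType} {d : nat} (X : 'M[R]_d) : Prop :=
  X^T = X /\ forall v : 'cV[R]_d, v != 0 -> 0 < (v^T *m X *m v) 0 0.

Definition hb_mat {R : realType} (mu beta g : R) : 'M[R]_2 :=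
  \matrix_(i < 2, j < 2)
    if (i : nat) == 0%N then (if (j : nat) == 0%N then 1 + beta - mu * g else - beta)
    else (if (j : nat) == 0%N then 1 else 0).

From HB Require Import structures.
From mathcomp Require Import all_boot all_order all_algebra.
From mathcomp Require Import boolp classical_sets reals.
From mathcomp Require Import ring lra.
Import Order.TTheory GRing.Theory Num.Theory.
Local Open Scope ring_scope.

(* The spectral norm is squeezed between an entry and the Frobenius norm.  For
   A = hb_mat mu beta g this gives ||A||^2 <= a^2 + beta^2 + 1 with
   a = 1 + beta - mu g, and ||A^2|| >= |(A^2)_{22}| = beta.  The tuning of mu
   and beta makes a^2 <= 4 beta for every g in [lam, Lam], whence the ratio
   is at most (1 + 4 beta + beta^2) / beta. *)

Lemma sum_CauchySchwarz (R : realDomainType) (I : finType) (a b : I -> R) :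
  (\sum_i a i * b i) ^+ 2 <= (\sum_i a i ^+ 2) * (\sum_i b i ^+ 2).
Proof.
have expand i j : (a i * b j - a j * b i) ^+ 2
    = a i ^+ 2 * b j ^+ 2 + a j ^+ 2 * b i ^+ 2 - (a i * b i) * (a j * b j) *+ 2.
  by rewrite mulr2n; ring.
have lagrange : \sum_i \sum_j (a i * b j - a j * b i) ^+ 2
    = ((\sum_i a i ^+ 2) * (\sum_i b i ^+ 2) - (\sum_i a i * b i) ^+ 2) *+ 2.
  under eq_bigr do under eq_bigr do rewrite expand.
  under eq_bigr do rewrite sumrB big_split sumrMnl /=.
  rewrite sumrB big_split sumrMnl /= [X in _ + X - _]exchange_big /=.
  by rewrite expr2 !big_distrlr /= mulrnBl mulr2n.
have : 0 <= \sum_i \sum_j (a i * b j - a j * b i) ^+ 2.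
  by do 2!apply: sumr_ge0 => ? _; rewrite sqr_ge0.
by rewrite lagrange pmulrn_lge0 // subr_ge0.
Qed.

Section SpectralNorm.
Context {R : realType} {m n : nat}.
Implicit Types (M : 'M[R]_(m, n)) (v : 'cV[R]_n).

Definition frobenius_sq M := \sum_i \sum_j M i j ^+ 2.

Lemma frobenius_sq_ge0 M : 0 <= frobenius_sq M.
Proof. by do 2!apply: sumr_ge0 => ? _; rewrite sqr_ge0. Qed.

Lemma vnorm2_0 : vnorm2 (0 : 'cV[R]_n) = 0.
Proof. by rewrite /vnorm2 big1 ?sqrtr0 // => i _; rewrite mxE expr0n. Qed.

Lemma vnorm2_delta j : vnorm2 (delta_mx j 0 : 'cV[R]_n) = 1.
Proof.
rewrite /vnorm2 (bigD1 j) //= big1 => [|i /negPf ij]; rewrite mxE ?ij //=.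
  by rewrite !eqxx expr1n addr0 sqrtr1.
by rewrite expr0n.
Qed.

Lemma vnorm2_mulmx_le M v :
  vnorm2 (M *m v) <= Num.sqrt (frobenius_sq M) * vnorm2 v.
Proof.
rewrite /vnorm2 -sqrtrM ?frobenius_sq_ge0 // ler_sqrt; last first.
  by rewrite mulr_ge0 ?frobenius_sq_ge0 // sumr_ge0 // => i _; rewrite sqr_ge0.
rewrite /frobenius_sq mulr_suml; apply: ler_sum => i _.
by rewrite mxE; apply: sum_CauchySchwarz.
Qed.

Lemma vnorm2_mulmx_bounded M v :
  vnorm2 v <= 1 -> vnorm2 (M *m v) <= Num.sqrt (frobenius_sq M).
Proof.
move=> v_le1; apply: le_trans (vnorm2_mulmx_le M v) _.
by rewrite ler_piMr ?sqrtr_ge0.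
Qed.

Lemma spec_norm_le_frobenius M : spec_norm M <= Num.sqrt (frobenius_sq M).
Proof.
apply: ge_sup; first by exists (vnorm2 (M *m 0)), 0; rewrite //= vnorm2_0.
by move=> _ [v v_le1 <-]; apply: vnorm2_mulmx_bounded.
Qed.

Lemma vnorm2_mulmx_le_spec_norm M v :
  vnorm2 v <= 1 -> vnorm2 (M *m v) <= spec_norm M.
Proof.
move=> v_le1; apply: sup_upper_bound; last by exists v.
split; first by exists (vnorm2 (M *m v)), v.
exists (Num.sqrt (frobenius_sq M)) => _ [w w_le1 <-].
exact: vnorm2_mulmx_bounded.
Qed.

Lemma spec_norm_ge0 M : 0 <= spec_norm M.
Proof.
apply: le_trans (vnorm2_mulmx_le_spec_norm M (0 : 'cV_n) _).
  exact: sqrtr_ge0.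
by rewrite vnorm2_0.
Qed.

Lemma spec_norm0 : spec_norm (0 : 'M[R]_(m, n)) = 0.
Proof.
apply/eqP; rewrite eq_le spec_norm_ge0 andbT.
apply: le_trans (spec_norm_le_frobenius 0) _.
rewrite /frobenius_sq big1 ?sqrtr0 // => i _.
by rewrite big1 // => j _; rewrite mxE expr0n.
Qed.

Lemma entry_le_spec_norm M i j : `|M i j| <= spec_norm M.
Proof.
apply: le_trans (vnorm2_mulmx_le_spec_norm M (delta_mx j 0) _); last first.
  by rewrite vnorm2_delta.
rewrite -colE /vnorm2 (bigD1 i) //= -sqrtr_sqr ler_sqrt; last first.
  by rewrite addr_ge0 ?sqr_ge0 ?sumr_ge0 // => k _; rewrite sqr_ge0.
by rewrite mxE lerDl sumr_ge0 // => k _; rewrite sqr_ge0.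
Qed.

End SpectralNorm.

Section HeavyBallMatrix.
Variables (R : realType) (mu beta g : R).

Let A := hb_mat mu beta g.

Lemma frobenius_sq_hb_mat :
  frobenius_sq A = (1 + beta - mu * g) ^+ 2 + beta ^+ 2 + 1.
Proof. by rewrite /frobenius_sq !big_ord_recr !big_ord0 /= !mxE /=; ring. Qed.

Lemma sqr_hb_mat11 : (A *m A) 1 1 = - beta.
Proof. by rewrite mxE !big_ord_recr big_ord0 /= !mxE /=; ring. Qed.

Lemma sqr_hb_mat_eq0 : beta = 0 -> mu * g = 1 -> A *m A = 0.
Proof.
move=> beta0 mug1; apply/matrixP => i j.
rewrite !mxE !big_ord_recr big_ord0 /= !mxE /= beta0 mug1.
by case: i j => [[|[|//]] ?] [[|[|//]] ?] /=; ring.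
Qed.

Lemma spec_norm_hb_mat_sqr_le :
  (1 + beta - mu * g) ^+ 2 <= 4 * beta ->
  spec_norm A ^+ 2 <= 1 + 4 * beta + beta ^+ 2.
Proof.
move=> trace_le; have frob_ge0 := frobenius_sq_ge0 A.
have : spec_norm A ^+ 2 <= frobenius_sq A.
  rewrite -(sqr_sqrtr frob_ge0) ler_sqr ?nnegrE ?spec_norm_ge0 ?sqrtr_ge0 //.
  exact: spec_norm_le_frobenius.
rewrite frobenius_sq_hb_mat; lra.
Qed.

Lemma spec_norm_sqr_hb_mat_ge : 0 <= beta -> beta <= spec_norm (A *m A).
Proof.
move=> beta_ge0; have := entry_le_spec_norm (A *m A) 1 1.
by rewrite sqr_hb_mat11 normrN ger0_norm.
Qed.

Lemma hb_mat_ratio_le :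
  0 <= beta -> (1 + beta - mu * g) ^+ 2 <= 4 * beta ->
  spec_norm A ^+ 2 / spec_norm (A *m A) <= beta^-1 * (1 + 4 * beta + beta ^+ 2).
Proof.
move=> beta_ge0 trace_le.
have [beta0|beta_neq0] := eqVneq beta 0.
  have mug1 : mu * g = 1.
    apply/eqP; rewrite -subr_eq0 -sqrf_eq0 eq_le sqr_ge0 andbT.
    by move: trace_le; rewrite beta0 addr0 mulr0 -sqrrN opprB.
  by rewrite sqr_hb_mat_eq0 // spec_norm0 beta0 !invr0 !mulr0 mul0r.
have beta_gt0 : 0 < beta by rewrite lt_def beta_neq0.
have AA_ge := spec_norm_sqr_hb_mat_ge beta_ge0.
rewrite ler_pdivrMr ?(lt_le_trans beta_gt0) //.
apply: le_trans (spec_norm_hb_mat_sqr_le trace_le) _.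
rewrite mulrAC -[leLHS]mul1r ler_wpM2r ?addr_ge0 ?sqr_ge0 ?mulr_ge0 //.
by rewrite mulrC ler_pdivlMr ?mul1r.
Qed.

End HeavyBallMatrix.

(* a^2 <= 4 beta, with a the trace of hb_mat, says that its characteristic
   polynomial X^2 - a X + beta has complex roots of modulus sqrt beta: mu and
   beta are tuned so that this holds across the whole spectrum [s^2, t^2]. *)
Lemma hb_trace_sqr_le (R : realFieldType) (s t g : R) :
  0 < s -> s <= t -> s ^+ 2 <= g <= t ^+ 2 ->
  (1 + ((t - s) / (t + s)) ^+ 2 - 4 / (s + t) ^+ 2 * g) ^+ 2
    <= 4 * ((t - s) / (t + s)) ^+ 2.
Proof.
move=> s_gt0 s_le_t /andP[g_ge g_le]; rewrite [s + t]addrC.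
have p_gt0 : 0 < t + s by lra.
have p_neq0 : t + s != 0 by rewrite gt_eqF.
set k := 2 * t ^+ 2 + 2 * s ^+ 2 - 4 * g.
have -> : 1 + ((t - s) / (t + s)) ^+ 2 - 4 / (t + s) ^+ 2 * g = k / (t + s) ^+ 2.
  by rewrite /k; field.
have -> : 4 * ((t - s) / (t + s)) ^+ 2
    = (2 * (t - s) * (t + s)) ^+ 2 / ((t + s) ^+ 2) ^+ 2 by field.
rewrite expr_div_n ler_pM2r ?invr_gt0 ?exprn_gt0 //.
rewrite -subr_ge0 (_ : _ - _ = 16 * ((g - s ^+ 2) * (t ^+ 2 - g))).
  by rewrite mulr_ge0 // mulr_ge0 // !subr_ge0.
by rewrite /k; ring.
Qed.

Theorem lemmaA4 (R : realType) (d : nat) (X : 'M[R]_d) (gamma : 'I_d -> R)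
    (lam Lam : R) :
  posdef X ->
  char_poly X = \prod_(i < d) ('X - (gamma i)%:P) ->
  (forall i j : 'I_d, (i <= j)%N -> gamma j <= gamma i) ->
  0 < lam -> lam <= Lam ->
  (forall i : 'I_d, lam <= gamma i <= Lam) ->
  let mu := 4 / (Num.sqrt lam + Num.sqrt Lam) ^+ 2 in
  let beta := ((Num.sqrt Lam - Num.sqrt lam) / (Num.sqrt Lam + Num.sqrt lam)) ^+ 2 in
  \big[Num.max/0]_(i < d)
     (spec_norm (hb_mat mu beta (gamma i)) ^+ 2
        / spec_norm (hb_mat mu beta (gamma i) *m hb_mat mu beta (gamma i)))
  <= beta^-1 * (1 + 4 * beta + beta ^+ 2).
Proof.
move=> _ _ _ lam_gt0 lam_le_Lam gamma_in; cbv zeta.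
set mu := 4 / _; set beta := (_ / _) ^+ 2.
have beta_ge0 : 0 <= beta by rewrite sqr_ge0.
have trace_le i : (1 + beta - mu * gamma i) ^+ 2 <= 4 * beta.
  have Lam_gt0 := lt_le_trans lam_gt0 lam_le_Lam.
  apply: hb_trace_sqr_le; rewrite ?sqrtr_gt0 ?ler_wsqrtr //.
  by rewrite !sqr_sqrtr ?gamma_in ?ltW.
clearbody mu beta; apply: bigmax_le => [|i _]; last exact: hb_mat_ratio_le.
by rewrite mulr_ge0 ?invr_ge0 // !addr_ge0 ?sqr_ge0 ?mulr_ge0.
Qed.
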